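(* Let $k$ be a non-archimedean local field of residue characteristic $2$ with ring of integers $\mathfrak o$ and uniformizer $\varpi$. Let $\rho\in\mathfrak o$, $\ell\ge0$ an integer, and $X=\operatorname{meas}\{x\in\mathfrak o: x^2\equiv\rho \bmod \varpi^\ell\}$. Write $\rho=\eta^2+b$, where $b\mathfrak o$ is the quadratic defect of $\rho$. Then: (1) if $b\not\equiv0\bmod\varpi^\ell$, then $X=0$; (2) if $b\equiv0\bmod\varpi^\ell$ and $|\varpi^\ell|<|4\eta^2|$, then $X=2\,|\varpi^\ell/(2\eta)|$; (3) otherwise, $X=|\varpi|^{\lceil \ell/2\rceil}$.
   Context: The measure on $\mathfrak o$ is the additive Haar measure with $\mathfrak o$ of volume $1$; $|\cdot|$ is normalized by $|\varpi|=q^{-1}$, $q$ the residue field cardinality. The quadratic defect of $\rho\in k$ is the intersection of all ideals $b\mathfrak o$ over those $b\in k$ for which $\rho-b$ is a square in $k$ (it is $0$ when $\rho$ is a square). *)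

From HB Require Import structures.
From mathcomp Require Import all_boot all_order all_algebra.
From mathcomp Require Import all_classical all_reals all_analysis.
Set Implicit Arguments. Unset Strict Implicit. Unset Printing Implicit Defensive.
Import Order.TTheory GRing.Theory Num.Theory.
Local Open Scope classical_set_scope.
Local Open Scope ring_scope.

Definition is_nonarch_local_field (R : realType) (k : fieldType)
    (av : k -> R) (pi : k) (q : nat) : Prop :=
  [/\ (forall x, 0 <= av x) /\ (forall x, av x = 0 <-> x = 0),
      (forall x y, av (x * y) = av x * av y) /\
      (forall x y, av (x + y) <= Num.max (av x) (av y)),
      av pi = (q%:R)^-1 /\ (forall x, x != 0 -> exists n : int, av x = (q%:R : R) ^ n),
      (forall u : nat -> k,
         (forall e : R, 0 < e -> exists N, forall m n, (N <= m)%N -> (N <= n)%N ->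
            av (u m - u n) < e) ->
         exists l, forall e : R, 0 < e -> exists N, forall n, (N <= n)%N -> av (u n - l) < e)
    & (* the residue field o / pi o has exactly q elements *)
      (exists r : 'I_q -> k,
         [/\ forall i, av (r i) <= 1,
             forall i j, i != j -> ~ (av (r i - r j) < 1)
           & forall x, av x <= 1 -> exists i, av (x - r i) < 1])].

Definition residue_char2 (R : realType) (k : fieldType) (av : k -> R) : Prop :=
  av 2 < 1.

Definition ints (R : realType) (k : fieldType) (av : k -> R) : set k :=
  [set x | av x <= 1].
Definition pideal (R : realType) (k : fieldType) (av : k -> R) (b : k) : set k :=
  [set y | exists z, av z <= 1 /\ y = b * z].

Definition qdefect (R : realType) (k : fieldType) (av : k -> R) (rho : k) : set k :=
  [set y | forall b, (exists c, rho - b = c ^+ 2) -> pideal av b y].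

(* k viewed as a pointed type (point 0), needed by the generated sigma-algebra *)
Definition kpt (k : fieldType) : Type := k.
HB.instance Definition _ (k : fieldType) := Choice.on (kpt k).
HB.instance Definition _ (k : fieldType) := isPointed.Build (kpt k) (0 : k).

Definition balls (R : realType) (k : fieldType) (av : k -> R) : set (set (kpt k)) :=
  [set B | exists c (r : R), B = [set y | av (y - c) <= r]].

Notation kmeas av := (g_sigma_algebraType (balls av)).

Definition is_haar (R : realType) (k : fieldType) (av : k -> R)
    (mu : {measure set (kmeas av) -> \bar R}) : Prop :=
  (forall (a : k) (A : set (kmeas av)), measurable A ->
      mu [set a + x | x in A] = mu A) /\
  mu (ints av) = 1%E.

From HB Require Import structures.
From mathcomp Require Import all_boot all_order all_algebra.
From mathcomp Require Import all_classical all_reals all_analysis.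
From mathcomp Require Import ring lra zify.

(* Minimality of the quadratic defect gives |b| <= |rho - x^2|
   for every x, so the congruence x^2 = rho mod pi^l has no solution unless
   |b| <= |pi^l|, and then it is equivalent to |x - eta| |x + eta| <= |pi^l|.
   The two factors differ by 2 eta, so by the ultrametric inequality at most one of
   them is smaller than |2 eta|.  Hence if |2 eta|^2 > |pi^l| the solutions form two
   disjoint balls of radius |pi^l / (2 eta)| around eta and -eta, and otherwise the
   single ball of radius |pi|^(ceil (l/2)) around eta.  A ball of radius |pi|^n is the
   disjoint union of q translates of a ball of radius |pi|^(n+1), so its Haar measure
   is |pi|^n. *)
Set Implicit Arguments.
Unset Strict Implicit.
Unset Printing Implicit Defensive.
Import Order.TTheory GRing.Theory Num.Theory.
Local Open Scope classical_set_scope.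
Local Open Scope ring_scope.

Section LocalField.
Variables (R : realType) (k : fieldType) (av : k -> R) (pi : k) (q : nat).
Hypothesis Hk : is_nonarch_local_field av pi q.

Lemma av_ge0 x : 0 <= av x.
Proof. by case: Hk => [[H _]] *. Qed.

Lemma av_eq0 x : av x = 0 <-> x = 0.
Proof. by case: Hk => [[_ H]] *. Qed.

Lemma av_gt0 x : x != 0 -> 0 < av x.
Proof. by move=> x0; rewrite lt_def av_ge0 andbT; apply: contra_neq x0 => /av_eq0. Qed.

Lemma avM x y : av (x * y) = av x * av y.
Proof. by case: Hk => _ [H _] *. Qed.

Lemma avD x y : av (x + y) <= Num.max (av x) (av y).
Proof. by case: Hk => _ [_ H] *. Qed.

Lemma av0 : av 0 = 0.
Proof. exact/av_eq0. Qed.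

Lemma av1 : av 1 = 1.
Proof.
have av1_neq0 : av 1 != 0 by rewrite lt0r_neq0 ?av_gt0 ?oner_neq0.
by apply: (mulIf av1_neq0); rewrite mul1r -avM mulr1.
Qed.

Lemma avN x : av (- x) = av x.
Proof.
have avN1 : av (-1) = 1.
  by apply/eqP; rewrite -sqrp_eq1 ?av_ge0 // expr2 -avM mulrNN mulr1 av1.
by rewrite -mulN1r avM avN1 mul1r.
Qed.

Lemma avB x y : av (x - y) = av (y - x).
Proof. by rewrite -avN opprB. Qed.

Lemma avX x n : av (x ^+ n) = av x ^+ n.
Proof. by elim: n => [|n IHn]; rewrite ?av1 // !exprS avM IHn. Qed.

Lemma avV x : av x^-1 = (av x)^-1.
Proof.
have [->|x0] := eqVneq x 0; first by rewrite invr0 av0 invr0.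
apply: (mulfI (lt0r_neq0 (av_gt0 x0))).
by rewrite -avM !mulfV ?av1 ?lt0r_neq0 ?av_gt0.
Qed.

Lemma avD_le x y r : av x <= r -> av y <= r -> av (x + y) <= r.
Proof. by move=> hx hy; apply: le_trans (avD x y) _; rewrite ge_max hx hy. Qed.

Lemma avD_lt x y r : av x < r -> av y < r -> av (x + y) < r.
Proof. by move=> hx hy; apply: le_lt_trans (avD x y) _; rewrite gt_max hx hy. Qed.

Lemma avD_dominant x y : av y < av x -> av (x + y) = av x.
Proof.
move=> yx; apply/eqP; rewrite eq_le avD_le ?(ltW yx) //= leNgt; apply/negP => hlt.
have : av ((x + y) - y) < av x by apply: avD_lt; rewrite ?avN.
by rewrite addrK ltxx.
Qed.

Lemma av_sqr_gt_neq0 x y : av x < av y ^+ 2 -> y != 0.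
Proof. by apply: contraTneq => ->; rewrite av0 expr0n -leNgt av_ge0. Qed.

Lemma av_div_lt x y : av x < av y ^+ 2 -> av (x / y) < av y.
Proof.
move=> xy; have y0 := av_sqr_gt_neq0 xy.
by rewrite avM avV ltr_pdivrMr ?av_gt0 // -expr2.
Qed.

Lemma av_nat_le1 n : av n%:R <= 1.
Proof.
elim: n => [|n IHn]; first by rewrite av0 ler01.
by rewrite -addn1 natrD avD_le ?av1.
Qed.

Lemma pideal_le c y : pideal av c y -> av y <= av c.
Proof. by case=> z [z1 ->]; rewrite avM ler_piMr ?av_ge0. Qed.

Lemma pidealP c y : c != 0 -> pideal av c y <-> av y <= av c.
Proof.
move=> c0; split; first exact: pideal_le.
move=> yc; exists (c^-1 * y); split; last by rewrite mulVKf.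
by rewrite avM avV mulrC ler_pdivrMr ?av_gt0 // mul1r.
Qed.

(* 0 and 1 are distinct modulo pi. *)
Lemma q_gt1 : (1 < q)%N.
Proof.
case: Hk => _ _ _ _ [r [_ _ r_cover]].
have [i ri0] : exists i, av (0 - r i) < 1 by apply: r_cover; rewrite av0 ler01.
have [j rj1] : exists j, av (1 - r j) < 1 by apply: r_cover; rewrite av1.
rewrite ltnNge; apply/negP => q_le1.
have ij : i = j by apply: ord_inj; move: (ltn_ord i) (ltn_ord j); lia.
suff : av 1 < 1 by rewrite av1 ltxx.
have -> : (1 : k) = (1 - r j) - (0 - r i) by rewrite ij; ring.
by apply: avD_lt; rewrite ?avN.
Qed.

Lemma avpi : av pi = (q%:R)^-1.
Proof. by case: Hk => _ _ [H _]. Qed.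

Lemma avpi_gt0 : 0 < av pi.
Proof. by rewrite avpi invr_gt0 ltr0n (ltn_trans _ q_gt1). Qed.

Lemma avpi_lt1 : av pi < 1.
Proof. by rewrite avpi invf_lt1 ?ltr0n ?ltr1n ?q_gt1 ?(ltn_trans _ q_gt1). Qed.

Lemma pi_neq0 : pi != 0.
Proof. by apply: contraTneq avpi_gt0 => ->; rewrite av0 ltxx. Qed.

Lemma avpiX_gt0 n : 0 < av pi ^+ n.
Proof. exact: exprn_gt0 avpi_gt0. Qed.

Lemma avpiX_le1 n : av pi ^+ n <= 1.
Proof. exact: exprn_ile1 (ltW avpi_gt0) (ltW avpi_lt1). Qed.

Lemma ler_avpiX m n : (av pi ^+ m <= av pi ^+ n) = (n <= m)%N.
Proof. by rewrite (ler_iXn2l avpi_gt0 avpi_lt1). Qed.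

Lemma ltr_avpiX m n : (av pi ^+ m < av pi ^+ n) = (n < m)%N.
Proof. by rewrite (ltr_iXn2l avpi_gt0 avpi_lt1). Qed.

Lemma av_int_expn x : x != 0 -> av x <= 1 -> exists n : nat, av x = av pi ^+ n.
Proof.
move=> x0 x1; case: Hk => _ _ [_ value_group] _ _.
have q1 : 1 < q%:R :> R by rewrite ltr1n q_gt1.
have [[[|m]|m] avx] := value_group x x0.
- by exists 0%N; rewrite avx expr0z.
- by move: x1; rewrite avx -(expr0 (q%:R : R)) /= (ler_eXn2l q1).
- by exists m.+1; rewrite avx NegzE -exprnN avpi exprVn.
Qed.

Lemma av_le_next x n : av x < av pi ^+ n -> av x <= av pi ^+ n.+1.
Proof.
move=> xn; have [->|x0] := eqVneq x 0; first by rewrite av0 ltW ?avpiX_gt0.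
have [m avx] := av_int_expn x0 (le_trans (ltW xn) (avpiX_le1 n)).
by move: xn; rewrite avx ler_avpiX ltr_avpiX.
Qed.

Lemma av_le_sqrt y l : av y <= 1 -> av y ^+ 2 <= av pi ^+ l -> av y <= av pi ^+ uphalf l.
Proof.
move=> y1; have [->|y0] := eqVneq y 0; first by rewrite av0 => _; rewrite ltW ?avpiX_gt0.
have [n ->] := av_int_expn y0 y1.
by rewrite -exprM !ler_avpiX uphalfE leq_half_double ltnS muln2.
Qed.

Lemma avpiX_uphalf l : av pi ^+ uphalf l * av pi ^+ uphalf l <= av pi ^+ l.
Proof. by rewrite -exprD ler_avpiX addnn uphalfK leq_addl. Qed.

Definition cball (c : k) (r : R) : set (kmeas av) := [set y | av (y - c) <= r].

Lemma cball_measurable c r : measurable (cball c r).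
Proof. by apply: sub_sigma_algebra; exists c, r. Qed.

Lemma cball_disjoint c c' r : r < av (c - c') -> cball c r `&` cball c' r = set0.
Proof.
move=> rc; apply/seteqP; split => // y [/= yc yc'].
suff : av (c - c') <= r by rewrite leNgt rc.
have -> : c - c' = (y - c') - (y - c) by ring.
by apply: avD_le; rewrite ?avN.
Qed.

Lemma cball_partition (r : 'I_q -> k) n :
    (forall i, av (r i) <= 1) -> (forall x, av x <= 1 -> exists i, av (x - r i) < 1) ->
  cball 0 (av pi ^+ n) = \big[setU/set0]_(i < q) cball (pi ^+ n * r i) (av pi ^+ n.+1).
Proof.
move=> r_int r_cover; have pin0 : pi ^+ n != 0 by rewrite expf_neq0 // pi_neq0.
rewrite -bigcup_seq; apply/seteqP; split => y; rewrite /cball /= ?subr0.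
- move=> yn; have [|i yi] := r_cover (y / pi ^+ n).
    by rewrite avM avV avX ler_pdivrMr ?avpiX_gt0 // mul1r.
  exists i; first exact: mem_index_enum.
  rewrite /=; have -> : y - pi ^+ n * r i = pi ^+ n * (y / pi ^+ n - r i).
    by rewrite mulrBr mulrCA mulfV ?mulr1.
  by rewrite avM avX exprSr ler_wpM2l ?exprn_ge0 ?av_ge0 // -[av pi]expr1 av_le_next ?expr0.
- case=> i _ /= yi; rewrite -[y](subrK (pi ^+ n * r i)).
  apply: avD_le; first by apply: le_trans yi _; rewrite ler_avpiX.
  by rewrite avM avX // ler_piMr ?exprn_ge0 ?av_ge0.
Qed.

Lemma cball_partition_trivIset (r : 'I_q -> k) n :
    (forall i j, i != j -> ~ av (r i - r j) < 1) ->
  trivIset setT (fun i => cball (pi ^+ n * r i) (av pi ^+ n.+1)).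
Proof.
move=> r_distinct; apply/trivIsetP => i j _ _ ij.
apply: cball_disjoint; rewrite -mulrBr avM avX // exprSr ltr_pM2l ?avpiX_gt0 //.
rewrite ltNge; apply/negP => rij; apply: (r_distinct _ _ ij).
exact: le_lt_trans rij avpi_lt1.
Qed.

Variable mu : {measure set (kmeas av) -> \bar R}.
Hypothesis Hmu : is_haar mu.

Lemma mu_cball_translate c r : mu (cball c r) = mu (cball 0 r).
Proof.
rewrite -(Hmu.1 c _ (cball_measurable 0 r)); congr (mu _).
apply/seteqP; split => y /=; rewrite /cball /=.
- by move=> yc; exists (y - c); rewrite ?subr0 // addrC subrK.
- by case=> z /=; rewrite subr0 => zr <-; rewrite addrAC subrr add0r.
Qed.

Lemma mu_cball_split n : mu (cball 0 (av pi ^+ n)) = mu (cball 0 (av pi ^+ n.+1)) *+ q.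
Proof.
case: (Hk) => _ _ _ _ [r [r_int r_distinct r_cover]].
rewrite (cball_partition n r_int r_cover) measure_bigsetU_ord //; last first.
- exact: cball_partition_trivIset.
- by move=> i; apply: cball_measurable.
by rewrite (eq_bigr _ (fun i _ => mu_cball_translate _ _)) sumr_const card_ord.
Qed.

Lemma mu_cball0 n : mu (cball 0 (av pi ^+ n)) = (av pi ^+ n)%:E.
Proof.
elim: n => [|n IHn].
  by rewrite expr0 -Hmu.2; congr (mu _); apply/seteqP; split => y; rewrite /cball /= subr0.
have sub : cball 0 (av pi ^+ n.+1) `<=` cball 0 (av pi ^+ n).
  by move=> y /= /le_trans; apply; rewrite ler_avpiX.
have fin : mu (cball 0 (av pi ^+ n.+1)) \is a fin_num.
  rewrite ge0_fin_numE ?measure_ge0 //; apply: le_lt_trans (le_measure mu _ _ sub) _.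
  - by rewrite inE; apply: cball_measurable.
  - by rewrite inE; apply: cball_measurable.
  - by rewrite [X in (X < _)%E]IHn ltry.
move: IHn; rewrite mu_cball_split -(fineK fin) -[_ *+ q]EFin_natmul => -[IHn]; congr EFin.
set x := fine _ in IHn *.
rewrite exprSr -IHn avpi -[x *+ q]mulr_natr mulfK // pnatr_eq0 -lt0n.
exact: ltn_trans q_gt1.
Qed.

Lemma mu_cball c x : x != 0 -> av x <= 1 -> mu (cball c (av x)) = (av x)%:E.
Proof. by move=> x0 x1; have [n ->] := av_int_expn x0 x1; rewrite mu_cball_translate mu_cball0. Qed.

Definition sqrt_mod_set (rho : k) (l : nat) : set (kmeas av) :=
  [set x | av x <= 1 /\ pideal av (pi ^+ l) (x ^+ 2 - rho)].

Section SquareRootsModPi.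
Variables (rho : k) (l : nat) (eta b : k).
Hypotheses (Hrho : av rho <= 1) (Hdec : rho = eta ^+ 2 + b) (Hb : pideal av b = qdefect av rho).

Lemma av_defect_le c : av b <= av (rho - c ^+ 2).
Proof.
have : qdefect av rho b by rewrite -Hb; exists 1; rewrite av1 mulr1.
by move/(_ (rho - c ^+ 2)) => /(_ (ex_intro _ c _)) /pideal_le; apply; ring.
Qed.

Lemma av_eta_le1 : av eta <= 1.
Proof.
rewrite -(expr_le1 (_ : 0 < 2)%N) ?av_ge0 // -avX.
have -> : eta ^+ 2 = rho - b by rewrite Hdec addrK.
apply: avD_le; rewrite // avN; apply: le_trans Hrho.
by have := av_defect_le 0; rewrite expr0n subr0.
Qed.

Lemma av_2eta_le1 : av (2 * eta) <= 1.
Proof. by rewrite avM mulr_ile1 ?av_ge0 ?av_nat_le1 ?av_eta_le1. Qed.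

Lemma sqrt_mod_setP (x : kmeas av) : av b <= av (pi ^+ l) ->
  sqrt_mod_set rho l x <-> av x <= 1 /\ av (x - eta) * av (x + eta) <= av (pi ^+ l).
Proof.
move=> bl; have pil0 : pi ^+ l != 0 by rewrite expf_neq0 ?pi_neq0.
rewrite /sqrt_mod_set /=.
have -> : x ^+ 2 - rho = (x - eta) * (x + eta) - b by rewrite Hdec; ring.
rewrite pidealP // -avM.
split=> -[x1 xl]; split=> //; first rewrite -[_ * _](subrK b).
  by apply: avD_le.
by apply: avD_le; rewrite ?avN.
Qed.

Lemma sqrt_mod_set0 : av (pi ^+ l) < av b -> sqrt_mod_set rho l = set0.
Proof.
move=> lb; apply/seteqP; split => // x [_ /pideal_le xl].
rewrite avB in xl.
by have := le_lt_trans (le_trans (av_defect_le x) xl) lb; rewrite ltxx.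
Qed.

Lemma sqrt_mod_set_two_cballs (r := av (pi ^+ l / (2 * eta))) :
    av b <= av (pi ^+ l) -> av (pi ^+ l) < av (2 * eta) ^+ 2 ->
  sqrt_mod_set rho l = cball eta r `|` cball (- eta) r.
Proof.
move=> bl lA; set A := av (2 * eta).
have A_gt0 : 0 < A by rewrite av_gt0 ?(av_sqr_gt_neq0 lA).
have rA : r * A = av (pi ^+ l) by rewrite /r avM avV mulfVK ?lt0r_neq0.
have r_lt_A : r < A by apply: av_div_lt.
have near_root u w : av (w - u) = A -> av u <= r -> av u * av w <= av (pi ^+ l).
  move=> wu ur; rewrite -rA ler_pM ?av_ge0 //.
  by rewrite -[w](subrK u) avD_le ?wu // ltW ?(le_lt_trans ur).
have r_le1 : r <= 1 := le_trans (ltW r_lt_A) av_2eta_le1.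
apply/seteqP; split => x; rewrite /cball /= opprK.
- move=> /(sqrt_mod_setP _ bl) [_ xl].
  have [uA|Au] := ltP (av (x - eta)) A.
    left; rewrite -(ler_pM2r A_gt0) rA.
    have <- : av (2 * eta + (x - eta)) = A by rewrite avD_dominant.
    by rewrite (_ : 2 * eta + (x - eta) = x + eta) //; ring.
  right; rewrite leNgt; apply/negP => rw.
  have := av_ge0 (x + eta); nra.
- case=> xr; apply/(sqrt_mod_setP _ bl); split.
  + by rewrite -[x](subrK eta) avD_le ?av_eta_le1 ?(le_trans xr).
  + by apply: near_root _ _ _ xr; rewrite -/A; congr av; ring.
  + by rewrite -[x](addrK eta) avD_le ?avN ?av_eta_le1 ?(le_trans xr).
  + by rewrite mulrC; apply: near_root _ _ _ xr; rewrite -/A -avN; congr av; ring.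
Qed.

Lemma sqrt_mod_set_cball : av b <= av (pi ^+ l) -> av (2 * eta) ^+ 2 <= av (pi ^+ l) ->
  sqrt_mod_set rho l = cball eta (av pi ^+ uphalf l).
Proof.
move=> bl; rewrite avX => Al; set s := av pi ^+ uphalf l.
have As : av (2 * eta) <= s by apply: av_le_sqrt av_2eta_le1 Al.
have w_eq (x : k) : x + eta = (x - eta) + 2 * eta by ring.
apply/seteqP; split => x; rewrite /cball /=.
- move=> /(sqrt_mod_setP _ bl) [x1 xl]; rewrite leNgt; apply/negP => su.
  have wu : av (x + eta) = av (x - eta) by rewrite w_eq avD_dominant ?(le_lt_trans As).
  have u1 : av (x - eta) <= 1 by rewrite avD_le ?avN ?av_eta_le1.
  rewrite wu -expr2 avX in xl.
  by have := av_le_sqrt u1 xl; rewrite leNgt su.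
- move=> us; apply/(sqrt_mod_setP _ bl); split.
    by rewrite -[x](subrK eta) avD_le ?av_eta_le1 // (le_trans us) ?avpiX_le1.
  have ws : av (x + eta) <= s by rewrite w_eq avD_le.
  by rewrite avX; apply: le_trans (avpiX_uphalf l); rewrite ler_pM ?av_ge0.
Qed.

Lemma mu_sqrt_mod_set_two_cballs : av b <= av (pi ^+ l) -> av (pi ^+ l) < av (2 * eta) ^+ 2 ->
  mu (sqrt_mod_set rho l) = (2 * av (pi ^+ l / (2 * eta)))%:E.
Proof.
move=> bl lA; have r_lt := av_div_lt lA.
have r0 : pi ^+ l / (2 * eta) != 0.
  by rewrite mulf_neq0 ?invr_eq0 ?expf_neq0 ?pi_neq0 ?(av_sqr_gt_neq0 lA).
rewrite sqrt_mod_set_two_cballs // measureU; try exact: cball_measurable.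
  have r1 : av (pi ^+ l / (2 * eta)) <= 1 := le_trans (ltW r_lt) av_2eta_le1.
  by rewrite [X in (X + _)%E]mu_cball // [X in (_ + X)%E]mu_cball // -EFinD; congr EFin; ring.
by apply: cball_disjoint; rewrite (_ : eta - - eta = 2 * eta) //; ring.
Qed.

Lemma mu_sqrt_mod_set_cball : av b <= av (pi ^+ l) -> av (2 * eta) ^+ 2 <= av (pi ^+ l) ->
  mu (sqrt_mod_set rho l) = (av pi ^+ uphalf l)%:E.
Proof.
move=> bl Al; rewrite sqrt_mod_set_cball // -avX.
by rewrite mu_cball ?avX ?avpiX_le1 // expf_neq0 ?pi_neq0.
Qed.

End SquareRootsModPi.

End LocalField.

Theorem lemma3p2 (R : realType) (k : fieldType) (av : k -> R) (pi : k) (q : nat)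
    (Hk : is_nonarch_local_field av pi q) (H2 : residue_char2 av)
    (mu : {measure set (kmeas av) -> \bar R}) (Hmu : is_haar mu)
    (rho : k) (Hrho : av rho <= 1) (l : nat) (eta b : k)
    (Hdec : rho = eta ^+ 2 + b) (Hb : pideal av b = qdefect av rho) :
  let X := mu [set x : kmeas av | av x <= 1 /\ pideal av (pi ^+ l) (x ^+ 2 - rho)] in
  [/\ ~ pideal av (pi ^+ l) b -> X = 0%E,
      pideal av (pi ^+ l) b -> av (pi ^+ l) < av (4 * eta ^+ 2) ->
        X = (2 * av (pi ^+ l / (2 * eta)))%:E
    & pideal av (pi ^+ l) b -> ~ (av (pi ^+ l) < av (4 * eta ^+ 2)) ->
        X = (av pi ^+ uphalf l)%:E].
Proof.
move=> X.
have e4 : av (4 * eta ^+ 2) = av (2 * eta) ^+ 2 by rewrite -(avX Hk); congr av; ring.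
have pil0 : pi ^+ l != 0 by rewrite expf_neq0 ?(pi_neq0 Hk).
split => [nb | /(pideal_le Hk) bl | /(pideal_le Hk) bl]; rewrite ?e4.
- rewrite /X -/(sqrt_mod_set pi rho l) (sqrt_mod_set0 Hk Hb) ?measure0 // ltNge; apply/negP.
  by apply: contra_not nb => bl; apply/(pidealP Hk _ pil0).
- exact: (mu_sqrt_mod_set_two_cballs Hk Hmu Hrho Hdec Hb bl).
- move=> /negP; rewrite -leNgt.
  exact: (mu_sqrt_mod_set_cball Hk Hmu Hrho Hdec Hb bl).
Qed.
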